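(* Let $g:E^2\times E^2\to\mathbb R$ and let integers $i,\delta_1,\delta_2\ge0$ satisfy $i\le\delta_1$ and $\delta_2\ge\delta_1-i$. Let $(Z_n)_{n\ge0}$ be a stationary Markov chain with transition matrix $Q$, independent of $(X_n,Y_n)_{n\ge0}$, and write $\mathcal X=(X_n)_{n\ge0}$, $\mathcal Y=(Y_n)_{n\ge0}$, $\mathcal Z=(Z_n)_{n\ge0}$ and, for $T\ge1$, $\mathcal Y^T=(Y_{n+T})_{n\ge0}$. Then $$\mathbb E(\mathcal L^g(\mathcal X,\mathcal Y,\mathcal Z))=1,$$ and there is a constant $\rho>0$, not depending on $i,\delta_1,\delta_2,T$, such that $\mathbb E(\mathcal L^g(\mathcal X,\mathcal Y,\mathcal Y^T))\le\rho$ whenever $T\ge1$ and $i+T\ge\delta_1+1$.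
   Context: Let $E$ be a finite set and $P,Q$ irreducible aperiodic stochastic $E\times E$ matrices. Under $\mathbb P$, $(X_n)_{n\ge0}$ and $(Y_n)_{n\ge0}$ are independent stationary Markov chains with transition matrices $P$ and $Q$. For $g:E^2\times E^2\to\mathbb R$ let $\Phi_0(g)_{(x,y),(x',y')}=\exp(g(x,y,x',y'))P_{x,x'}Q_{y,y'}$ with spectral radius $\varphi_0(g)$ and positive right eigenvector $r^g_0$, and let $\Phi_1(g)_{(x,y,z),(x',y',z')}=\exp(g(x,y,x',y')+g(x,z,x',z'))P_{x,x'}Q_{y,y'}Q_{z,z'}$ with spectral radius $\varphi_1(g)$ and positive right eigenvector $r^g_1$. For sequences $(x_k)_{k\ge0},(y_k)_{k\ge0},(z_k)_{k\ge0}$ in $E$ put $\sigma_1=\sum_{k=1}^{i}g(x_{k-1},y_{k-1},x_k,y_k)$, $\sigma_2=\sum_{k=i+1}^{\delta_1}[g(x_{k-1},y_{k-1},x_k,y_k)+g(x_{k-1},z_{k-1},x_k,z_k)]$, $\sigma_3=\sum_{k=\delta_1+1}^{i+\delta_2}g(x_{k-1},z_{k-1},x_k,z_k)$, and $$\mathcal L^g=\frac{r^g_0(x_i,y_i)e^{\sigma_1}}{r^g_0(x_0,y_0)\varphi_0(g)^i}\cdot\frac{r^g_1(x_{\delta_1},y_{\delta_1},z_{\delta_1})e^{\sigma_2}}{r^g_1(x_i,y_i,z_i)\varphi_1(g)^{\delta_1-i}}\cdot\frac{r^g_0(x_{i+\delta_2},z_{i+\delta_2})e^{\sigma_3}}{r^g_0(x_{\delta_1},z_{\delta_1})\varphi_0(g)^{i+\delta_2-\delta_1}}.$$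 *)

From HB Require Import structures.
From mathcomp Require Import all_boot all_order all_algebra.
From mathcomp Require Import reals sequences exp.
From mathcomp Require Import complex.

Set Implicit Arguments.
Unset Strict Implicit.
Unset Printing Implicit Defensive.

Import Order.TTheory GRing.Theory Num.Theory.
Local Open Scope ring_scope.

Section Defs.
Variable R : realType.

Fixpoint mpow (T : finType) (A : T -> T -> R) (n : nat) : T -> T -> R :=
  match n with
  | 0 => fun s t => if s == t then 1 else 0
  | n'.+1 => fun s t => \sum_(u : T) mpow A n' s u * A u t
  end.

Definition stochastic (T : finType) (A : T -> T -> R) : Prop :=
  (forall s t, 0 <= A s t) /\ (forall s, \sum_(t : T) A s t = 1).

Definition irreducible (T : finType) (A : T -> T -> R) : Prop :=
  forall s t, exists2 n : nat, (0 < n)%N & 0 < mpow A n s t.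

Definition aperiodic (T : finType) (A : T -> T -> R) : Prop :=
  forall (s : T) (d : nat),
    (forall n : nat, (0 < n)%N -> 0 < mpow A n s s -> (d %| n)%N) -> d = 1%N.

Definition stationary_distr (T : finType) (mu : T -> R) (A : T -> T -> R) : Prop :=
  [/\ forall s, 0 <= mu s, \sum_(s : T) mu s = 1
    & forall t, \sum_(s : T) mu s * A s t = mu t].

Definition eigenvalue (T : finType) (A : T -> T -> R) (l : R[i]) : Prop :=
  exists v : T -> R[i], (exists t, v t != 0) /\
    forall s, \sum_(t : T) ((A s t)%:C)%C * v t = l * v s.

Definition is_spectral_radius (T : finType) (A : T -> T -> R) (rho : R) : Prop :=
  (exists2 l, eigenvalue A l & `|l| = (rho%:C)%C) /\
  (forall l, eigenvalue A l -> `|l| <= (rho%:C)%C).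

Definition pos_right_eigvec (T : finType) (A : T -> T -> R) (rho : R) (r : T -> R) : Prop :=
  (forall s, 0 < r s) /\ (forall s, \sum_(t : T) A s t * r t = rho * r s).

Variable E : finType.

Definition Phi0 (P Q : E -> E -> R) (g : E -> E -> E -> E -> R)
    (s t : E * E) : R :=
  expR (g s.1 s.2 t.1 t.2) * P s.1 t.1 * Q s.2 t.2.

Definition Phi1 (P Q : E -> E -> R) (g : E -> E -> E -> E -> R)
    (s t : E * E * E) : R :=
  expR (g s.1.1 s.1.2 t.1.1 t.1.2 + g s.1.1 s.2 t.1.1 t.2)
    * P s.1.1 t.1.1 * Q s.1.2 t.1.2 * Q s.2 t.2.

Definition Lg (g : E -> E -> E -> E -> R) (phi0 phi1 : R)
    (r0 : E * E -> R) (r1 : E * E * E -> R) (i d1 d2 : nat)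
    (x y z : nat -> E) : R :=
  let sigma1 := \sum_(1 <= k < i.+1) g (x k.-1) (y k.-1) (x k) (y k) in
  let sigma2 := \sum_(i.+1 <= k < d1.+1)
      (g (x k.-1) (y k.-1) (x k) (y k) + g (x k.-1) (z k.-1) (x k) (z k)) in
  let sigma3 := \sum_(d1.+1 <= k < (i + d2).+1) g (x k.-1) (z k.-1) (x k) (z k) in
  (r0 (x i, y i) * expR sigma1 / (r0 (x 0%N, y 0%N) * phi0 ^+ i))
  * (r1 (x d1, y d1, z d1) * expR sigma2 / (r1 (x i, y i, z i) * phi1 ^+ (d1 - i)))
  * (r0 (x (i + d2)%N, z (i + d2)%N) * expR sigma3
       / (r0 (x d1, z d1) * phi0 ^+ (i + d2 - d1))).

Definition path_prob (mu : E -> R) (A : E -> E -> R) (N : nat) (x : nat -> E) : R :=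
  mu (x 0%N) * \prod_(k < N) A (x k) (x k.+1).

(* a finite path 0..N, extended to a sequence (the extension beyond N is
   irrelevant for functionals depending only on coordinates <= N) *)
Definition ext (N : nat) (f : {ffun 'I_N.+1 -> E}) : nat -> E :=
  fun n => f (inord n).

(* E F(X, Y) for independent Markov chains X ~ (muX, A), Y ~ (muY, B),
   for F depending only on the coordinates 0..N *)
Definition expect2 (N : nat) (muX : E -> R) (A : E -> E -> R)
    (muY : E -> R) (B : E -> E -> R) (F : (nat -> E) -> (nat -> E) -> R) : R :=
  \sum_(x : {ffun 'I_N.+1 -> E}) \sum_(y : {ffun 'I_N.+1 -> E})
     path_prob muX A N (ext x) * path_prob muY B N (ext y) * F (ext x) (ext y).

(* E F(X, Y, Z) for independent Markov chains, F depending on coordinates 0..N *)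
Definition expect3 (N : nat) (muX : E -> R) (A : E -> E -> R)
    (muY : E -> R) (B : E -> E -> R) (muZ : E -> R) (C : E -> E -> R)
    (F : (nat -> E) -> (nat -> E) -> (nat -> E) -> R) : R :=
  \sum_(x : {ffun 'I_N.+1 -> E}) \sum_(y : {ffun 'I_N.+1 -> E})
   \sum_(z : {ffun 'I_N.+1 -> E})
     path_prob muX A N (ext x) * path_prob muY B N (ext y)
       * path_prob muZ C N (ext z) * F (ext x) (ext y) (ext z).

Definition shift (T : nat) (y : nat -> E) : nat -> E := fun n => y (n + T)%N.

End Defs.

From HB Require Import structures.
From mathcomp Require Import all_boot all_order all_algebra.
From mathcomp Require Import boolp reals sequences exp.
From mathcomp Require Import complex.
From mathcomp Require Import ring zify.
Import Order.TTheory GRing.Theory Num.Theory.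
Local Open Scope ring_scope.

Set Implicit Arguments.
Unset Strict Implicit.
Unset Printing Implicit Defensive.

(* L^g is a product, along the path of the triple chain (X, Y, Z) on E^3, of
   one-step factors obtained by normalising Phi0 and Phi1 with their positive
   right eigenvectors.  Each factor has conditional mean one given the current
   state, so E L^g(X, Y, Z) = 1 whatever the initial laws.
   For the second claim condition on Y_0, ..., Y_d1.  Since i + T > d1, the
   coordinates of Y^T read by L^g (those with index in [i, i + d2]) form a
   Q-chain started from Q^(i+T-d1)(Y_d1, .), and this law is at most
   rho * muY with rho = \sum_e 1 / muY(e).  Hence E L^g(X, Y, Y^T) is at most
   rho E L^g(X, Y, Z') = rho, with Z' an independent stationary Q-chain. *)

Section MarkovChainExpectation.
Variables (R : realType) (T : finType).
Implicit Types (mu nu : T -> R) (A : T -> T -> R) (x y : nat -> T) (F : (nat -> T) -> R).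

Definition path_expect mu A N F : R :=
  \sum_(x : {ffun 'I_N.+1 -> T}) path_prob mu A N (ext x) * F (ext x).

Definition depends_on (D : nat -> bool) F :=
  forall x y, (forall k, D k -> x k = y k) -> F x = F y.

Definition upd x n (t : T) : nat -> T := fun k => if k == n then t else x k.

Definition ffun_rcons N (p : {ffun 'I_N.+1 -> T} * T) : {ffun 'I_N.+2 -> T} :=
  [ffun j : 'I_N.+2 => if j == N.+1 :> nat then p.2 else p.1 (inord j)].

Lemma ffun_rcons_bij N : bijective (@ffun_rcons N).
Proof.
exists (fun f : {ffun 'I_N.+2 -> T} =>
  ([ffun j : 'I_N.+1 => f (widen_ord (leqnSn _) j)], f ord_max)).
  case=> f t; congr pair; last by rewrite ffunE eqxx.
  apply/ffunP => j; rewrite !ffunE /= ltn_eqF //.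
  by congr (f _); apply: val_inj; rewrite /= inordK // ltnS ltnW.
move=> f; apply/ffunP => j; rewrite !ffunE.
case: eqP => [jE|/eqP jN]; congr (f _); apply: val_inj => /=.
  by rewrite jE.
by rewrite inordK //; move: jN (ltn_ord j); lia.
Qed.

Lemma val_inord n k : val (inord k : 'I_n.+1) = if (k < n.+1)%N then k else 0%N.
Proof. by rewrite /inord /insubd; case: insubP => [u -> /= ->|/negbTE ->]. Qed.

Lemma ext_ffun_rcons N p : ext (@ffun_rcons N p) = upd (ext p.1) N.+1 p.2.
Proof.
apply: funext => k; rewrite /ext /upd ffunE val_inord.
case: (ltnP k N.+2) => kN //=.
rewrite gtn_eqF //; congr (p.1 _); apply: val_inj.
by rewrite !val_inord /= ltn_geF // ltnW.
Qed.

Lemma sum_ffunS N (G : (nat -> T) -> R) :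
  \sum_(f : {ffun 'I_N.+2 -> T}) G (ext f) =
  \sum_(f : {ffun 'I_N.+1 -> T}) \sum_t G (upd (ext f) N.+1 t).
Proof.
rewrite pair_bigA (reindex (@ffun_rcons N)) /=; last exact/onW_bij/ffun_rcons_bij.
by apply: eq_bigr => p _; rewrite ext_ffun_rcons.
Qed.

Lemma sum_ffun1 (G : (nat -> T) -> R) :
  \sum_(f : {ffun 'I_1 -> T}) G (ext f) = \sum_t G (fun=> t).
Proof.
rewrite (reindex (fun t => [ffun=> t] : {ffun 'I_1 -> T})) /=; last first.
  apply: onW_bij; exists (fun f : {ffun 'I_1 -> T} => f ord0) => [t|f].
    by rewrite ffunE.
  by apply/ffunP => j; rewrite ffunE (ord1 j).
by apply: eq_bigr => t _; congr G; apply: funext => k; rewrite /ext ffunE.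
Qed.

Lemma path_prob_upd mu A N x t :
  path_prob mu A N.+1 (upd x N.+1 t) = path_prob mu A N x * A (x N) t.
Proof.
rewrite /path_prob big_ord_recr /= mulrA; congr (_ * _ * _).
  apply: eq_bigr => k _; have kN : (k.+1 < N.+1)%N := ltn_ord k.
  by rewrite /upd (ltn_eqF (ltnW kN)) (ltn_eqF kN).
by rewrite /upd /= eqxx ltn_eqF.
Qed.

Lemma path_expect0 mu A F : path_expect mu A 0 F = \sum_t mu t * F (fun=> t).
Proof.
rewrite /path_expect (sum_ffun1 (fun x => path_prob mu A 0 x * F x)).
by apply: eq_bigr => t _; rewrite /path_prob big_ord0 mulr1.
Qed.

Lemma path_expectS mu A N F :
  path_expect mu A N.+1 F =
  path_expect mu A N (fun x => \sum_t A (x N) t * F (upd x N.+1 t)).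
Proof.
rewrite /path_expect (sum_ffunS N (fun x => path_prob mu A N.+1 x * F x)).
apply: eq_bigr => f _; rewrite big_distrr; apply: eq_bigr => t _ /=.
by rewrite path_prob_upd mulrA.
Qed.

Lemma path_prob_ge0 mu A N x :
  (forall t, 0 <= mu t) -> (forall s t, 0 <= A s t) -> 0 <= path_prob mu A N x.
Proof. by move=> mu_ge0 A_ge0; rewrite mulr_ge0 // prodr_ge0. Qed.

Lemma path_expectZ mu A N c F :
  path_expect mu A N (fun x => c * F x) = c * path_expect mu A N F.
Proof. by rewrite /path_expect big_distrr; apply: eq_bigr => x _; rewrite mulrCA. Qed.

Lemma path_expect_mix (I : finType) (c : I -> R) (nu : I -> T -> R) A N F :
  \sum_i c i * path_expect (nu i) A N F =
  path_expect (fun t => \sum_i c i * nu i t) A N F.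
Proof.
rewrite /path_expect /path_prob; under eq_bigr do rewrite big_distrr /=.
rewrite exchange_big; apply: eq_bigr => x _ /=; rewrite !big_distrl.
by apply: eq_bigr => i _ /=; rewrite !mulrA.
Qed.

Lemma ler_path_expect mu A N F G :
  (forall t, 0 <= mu t) -> (forall s t, 0 <= A s t) -> (forall x, F x <= G x) ->
  path_expect mu A N F <= path_expect mu A N G.
Proof.
move=> mu_ge0 A_ge0 FG; apply: ler_sum => x _.
by rewrite ler_wpM2l ?FG ?path_prob_ge0.
Qed.

Lemma ler_path_expect_law nu mu A N c F :
  (forall t, 0 <= nu t <= c * mu t) -> (forall s t, 0 <= A s t) -> (forall x, 0 <= F x) ->
  path_expect nu A N F <= c * path_expect mu A N F.
Proof.
move=> nu_le A_ge0 F_ge0; rewrite /path_expect /path_prob mulr_sumr.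
apply: ler_sum => x _; rewrite !mulrA ler_wpM2r ?ler_wpM2r ?prodr_ge0 //.
by have /andP[] := nu_le (ext x 0%N).
Qed.

Lemma upd_depends n N F x t :
  depends_on (fun k => (k <= n)%N) F -> (n <= N)%N -> F (upd x N.+1 t) = F x.
Proof.
move=> Fn nN; apply: Fn => k kn; rewrite /upd ltn_eqF //.
by rewrite ltnS (leq_trans kn).
Qed.

Lemma path_expect_trunc mu A n N F :
  (forall s, \sum_t A s t = 1) -> depends_on (fun k => (k <= n)%N) F -> (n <= N)%N ->
  path_expect mu A N F = path_expect mu A n F.
Proof.
move=> A1 Fn; elim: N => [|N IH]; first by rewrite leqn0 => /eqP ->.
rewrite leq_eqVlt => /orP[/eqP -> //|nN]; rewrite path_expectS -IH //.
congr path_expect; apply: funext => x.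
by under eq_bigr do rewrite (upd_depends _ _ Fn nN); rewrite -big_distrl /= A1 mul1r.
Qed.

Lemma mpow_ge0 A n s t : (forall s t, 0 <= A s t) -> 0 <= mpow A n s t.
Proof.
move=> A_ge0; elim: n s t => [|n IH] s t /=; first by case: eqP.
by apply: sumr_ge0 => u _; apply: mulr_ge0.
Qed.

Lemma mpow_sum1 A n s : (forall s, \sum_t A s t = 1) -> \sum_t mpow A n s t = 1.
Proof.
move=> A1; elim: n s => [|n IH] s /=.
  by rewrite (bigD1 s) //= eqxx big1 ?addr0 // => t /negbTE; rewrite eq_sym => ->.
by rewrite exchange_big /= -(IH s); apply: eq_bigr => u _; rewrite -big_distrr /= A1 mulr1.
Qed.

Lemma mpow_le1 A n s t : stochastic A -> mpow A n s t <= 1.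
Proof.
case=> A_ge0 A1; rewrite -(mpow_sum1 n s A1) (bigD1 t) //= lerDl.
by apply: sumr_ge0 => u _; apply: mpow_ge0.
Qed.

Lemma mpow_stat mu A n t :
  (forall t, \sum_s mu s * A s t = mu t) -> \sum_s mu s * mpow A n s t = mu t.
Proof.
move=> mu_stat; elim: n t => [|n IH] t /=.
  by rewrite (bigD1 t) //= eqxx mulr1 big1 ?addr0 // => s /negbTE ->; rewrite mulr0.
rewrite -[RHS]mu_stat; under eq_bigr do rewrite big_distrr /=.
rewrite exchange_big /=; apply: eq_bigr => u _.
by rewrite -IH big_distrl /=; apply: eq_bigr => s _; rewrite mulrA.
Qed.

Lemma path_expect_last mu A a n (G : (nat -> T) -> T -> R) :
  (forall t, depends_on (fun k => (k <= a)%N) (G^~ t)) ->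
  path_expect mu A (n + a) (fun y => G y (y (n + a)%N)) =
  path_expect mu A a (fun y => \sum_t mpow A n (y a) t * G y t).
Proof.
elim: n G => [|n IH] G Ga.
  rewrite add0n; congr path_expect; apply: funext => y /=.
  rewrite (bigD1 (y a)) //= eqxx mul1r big1 ?addr0 // => t /negbTE.
  by rewrite eq_sym => ->; rewrite mul0r.
pose G' y s := \sum_t A s t * G y t.
transitivity (path_expect mu A (n + a) (fun y => G' y (y (n + a)%N))).
  rewrite addSn path_expectS; congr path_expect; apply: funext => y.
  apply: eq_bigr => t _; rewrite /upd eqxx.
  by rewrite (upd_depends _ _ (Ga t)) // leq_addl.
rewrite IH; last by move=> s y y' yy'; apply: eq_bigr => t _; rewrite (Ga t y y').
congr path_expect; apply: funext => y /=; rewrite /G'.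
under eq_bigr do rewrite big_distrr /=.
rewrite exchange_big; apply: eq_bigr => t _ /=; rewrite big_distrl.
by apply: eq_bigr => s _ /=; rewrite mulrA.
Qed.

Lemma path_expect_markov mu A a S m (F : (nat -> T) -> (nat -> T) -> R) :
  (a <= S)%N ->
  (forall w, depends_on (fun k => (k <= a)%N) (F^~ w)) ->
  (forall y, depends_on (fun k => (k <= m)%N) (F y)) ->
  path_expect mu A (m + S) (fun y => F y (shift S y)) =
  path_expect mu A a (fun y => path_expect (mpow A (S - a) (y a)) A m (F y)).
Proof.
move=> aS; have [n ->] : exists n, S = (n + a)%N by exists (S - a)%N; rewrite subnK.
rewrite addnK; elim: m F => [|m IH] F Fa Fm.
  transitivity (path_expect mu A (n + a) (fun y => F y (fun=> y (n + a)%N))).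
    congr path_expect; apply: funext => y; apply: Fm => k.
    by rewrite leqn0 => /eqP ->.
  rewrite (path_expect_last _ _ _ (G := fun y t => F y (fun=> t))) //.
  by congr path_expect; apply: funext => y; rewrite path_expect0.
pose F' y w := \sum_t A (w m) t * F y (upd w m.+1 t).
transitivity (path_expect mu A (m + (n + a)) (fun y => F' y (shift (n + a) y))).
  rewrite addSn path_expectS; congr path_expect; apply: funext => y.
  apply: eq_bigr => t _; rewrite (upd_depends _ _ (Fa _)); last first.
    by rewrite addnA leq_addl.
  congr (_ * F y _); apply: funext => k.
  by rewrite /shift /upd -addSn eqn_add2r.
rewrite IH => [|w y y' yy'|y w w' ww'].
- by congr path_expect; apply: funext => y; rewrite path_expectS.
- by apply: eq_bigr => t _; rewrite (Fa _ y y').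
- rewrite /F' ww' //; apply: eq_bigr => t _; congr (_ * _); apply: Fm => k km.
  by rewrite /upd; case: eqP => // /eqP kNm; apply: ww'; rewrite -ltnS ltn_neqAle kNm.
Qed.

Lemma path_expect_shift mu A S m H :
  (forall t, \sum_s mu s * A s t = mu t) -> depends_on (fun k => (k <= m)%N) H ->
  path_expect mu A (m + S) (fun y => H (shift S y)) = path_expect mu A m H.
Proof.
move=> mu_stat Hm.
rewrite (@path_expect_markov mu A 0 S m (fun _ w => H w)) //= subn0.
rewrite path_expect0 path_expect_mix; congr path_expect.
by apply: funext => t; apply: mpow_stat.
Qed.

(* Truncated subtraction: all coordinates below [i] of [delay i x] read [x 0];
   only the coordinates from [i] on are ever used. *)
Definition delay (i : nat) x : nat -> T := fun n => x (n - i)%N.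

Lemma path_expect_window mu A i d m N H :
  (forall s, \sum_t A s t = 1) -> (forall t, \sum_s mu s * A s t = mu t) ->
  depends_on (fun k => (i <= k <= i + d)%N) H -> (d <= m)%N -> (m + i <= N)%N ->
  path_expect mu A N H = path_expect mu A m (fun w => H (delay i w)).
Proof.
move=> A1 mu_stat Hwin dm mN.
rewrite (@path_expect_trunc mu A (m + i) N H) //; last first.
  move=> x y xy; apply: Hwin => k /andP[_ kd]; apply: xy.
  by rewrite addnC (leq_trans kd) // leq_add2l.
rewrite -(@path_expect_shift mu A i m (fun w => H (delay i w))) //; last first.
  move=> x y xy; apply: Hwin => k /andP[ik kd]; rewrite /delay xy //.
  by rewrite leq_subLR (leq_trans kd) // leq_add2l.
congr path_expect; apply: funext => y; apply: Hwin => k /andP[ik _].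
by rewrite /delay /shift subnK.
Qed.

End MarkovChainExpectation.

Section ProductChain.
Variables (R : realType) (T1 T2 : finType).

Definition law_prod (mu1 : T1 -> R) (mu2 : T2 -> R) (s : T1 * T2) : R := mu1 s.1 * mu2 s.2.

Definition kernel_prod (A1 : T1 -> T1 -> R) (A2 : T2 -> T2 -> R) (s : T1 * T2) :=
  law_prod (A1 s.1) (A2 s.2).

Lemma sum_law_prod_fst (mu1 : T1 -> R) (mu2 : T2 -> R) (f : T1 -> R) :
  \sum_s law_prod mu1 mu2 s * f s.1 = (\sum_u mu1 u * f u) * \sum_v mu2 v.
Proof.
transitivity (\sum_u \sum_v mu1 u * mu2 v * f u); first by rewrite pair_bigA.
rewrite mulr_suml; apply: eq_bigr => u _; rewrite mulr_sumr.
by apply: eq_bigr => v _; rewrite mulrAC.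
Qed.

Lemma sum_law_prod (mu1 : T1 -> R) (mu2 : T2 -> R) :
  \sum_s law_prod mu1 mu2 s = (\sum_u mu1 u) * \sum_v mu2 v.
Proof.
transitivity (\sum_u \sum_v mu1 u * mu2 v); first by rewrite pair_bigA.
by rewrite mulr_suml; apply: eq_bigr => u _; rewrite mulr_sumr.
Qed.

Lemma path_prob_prod mu1 mu2 A1 A2 N (w : nat -> T1 * T2) :
  path_prob (law_prod mu1 mu2) (kernel_prod A1 A2) N w =
  path_prob mu1 A1 N (fst \o w) * path_prob mu2 A2 N (snd \o w).
Proof. by rewrite /path_prob big_split /= mulrACA. Qed.

Definition ffun_zip n (p : {ffun 'I_n -> T1} * {ffun 'I_n -> T2}) : {ffun 'I_n -> T1 * T2} :=
  [ffun j => (p.1 j, p.2 j)].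

Lemma ffun_zip_bij n : bijective (@ffun_zip n).
Proof.
exists (fun w : {ffun 'I_n -> T1 * T2} => ([ffun j => (w j).1], [ffun j => (w j).2])).
  by case=> x y; congr pair; apply/ffunP => j; rewrite !ffunE.
by move=> w; apply/ffunP => j; rewrite !ffunE -surjective_pairing.
Qed.

Lemma path_expect_prod mu1 mu2 A1 A2 N (F : (nat -> T1) -> (nat -> T2) -> R) :
  path_expect mu1 A1 N (fun x => path_expect mu2 A2 N (F x)) =
  path_expect (law_prod mu1 mu2) (kernel_prod A1 A2) N
    (fun w => F (fst \o w) (snd \o w)).
Proof.
rewrite /path_expect [RHS](reindex (@ffun_zip N.+1)); last exact/onW_bij/ffun_zip_bij.
under [LHS]eq_bigr => x _ do rewrite mulr_sumr.
rewrite pair_bigA; apply: eq_bigr => -[x y] _ /=.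
have -> : ext (ffun_zip (x, y)) = fun n => (ext x n, ext y n).
  by apply: funext => n; rewrite /ext ffunE.
by rewrite path_prob_prod mulrA.
Qed.

End ProductChain.

Section Martingale.
Variables (R : realType) (T : finType).

Lemma path_expect_martingale (mu : T -> R) (A : T -> T -> R) (h : nat -> T -> T -> R) N :
  \sum_t mu t = 1 -> (forall k s, \sum_t A s t * h k s t = 1) ->
  path_expect mu A N (fun x => \prod_(1 <= k < N.+1) h k (x k.-1) (x k)) = 1.
Proof.
move=> mu1 h1; elim: N => [|N IH].
  by rewrite path_expect0 -[RHS]mu1; apply: eq_bigr => t _; rewrite big_geq ?mulr1.
rewrite path_expectS -[RHS]IH; congr path_expect; apply: funext => x.
have prodS t : \prod_(1 <= k < N.+2) h k (upd x N.+1 t k.-1) (upd x N.+1 t k) =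
    \prod_(1 <= k < N.+1) h k (x k.-1) (x k) * h N.+1 (x N) t.
  rewrite big_nat_recr //= /upd eqxx ltn_eqF //; congr (_ * _).
  apply: eq_big_nat => k /andP[_ kN].
  by rewrite (ltn_eqF kN) (ltn_eqF (leq_ltn_trans (leq_pred k) kN)).
under [LHS]eq_bigr => t _ do rewrite prodS mulrCA.
by rewrite -mulr_sumr h1 mulr1.
Qed.

End Martingale.

Lemma expect3E (R : realType) (E : finType) N (muX muY muZ : E -> R) (A B C : E -> E -> R) F :
  expect3 N muX A muY B muZ C F =
  path_expect muX A N (fun x => path_expect muY B N (fun y => path_expect muZ C N (F x y))).
Proof.
rewrite /expect3 /path_expect; apply: eq_bigr => x _; rewrite mulr_sumr.
apply: eq_bigr => y _; rewrite !mulr_sumr; apply: eq_bigr => z _.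
by rewrite !mulrA.
Qed.

Lemma expect2E (R : realType) (E : finType) N (muX muY : E -> R) (A B : E -> E -> R) F :
  expect2 N muX A muY B F = path_expect muX A N (fun x => path_expect muY B N (F x)).
Proof.
rewrite /expect2 /path_expect; apply: eq_bigr => x _; rewrite mulr_sumr.
by apply: eq_bigr => y _; rewrite mulrA.
Qed.

Section NonnegativeMatrices.
Variables (R : realType) (T : finType).
Implicit Types (mu : T -> R) (A : T -> T -> R).

Lemma psum1_exists_gt0 mu : (forall t, 0 <= mu t) -> \sum_t mu t = 1 -> exists t, 0 < mu t.
Proof.
move=> mu_ge0 mu1; apply/existsP; apply: contraTT isT => /existsPn mu_le0.
have : \sum_t mu t = 0 by apply: big1 => t _; apply/eqP; rewrite eq_le mu_ge0 andbT leNgt.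
by rewrite mu1 => /eqP; rewrite oner_eq0.
Qed.

Lemma pos_right_eigvec_gt0 A phi r s t :
  (forall t, 0 <= A s t) -> 0 < A s t -> pos_right_eigvec A phi r -> 0 < phi.
Proof.
move=> A_ge0 Ast [r_gt0 Ar].
have : 0 < phi * r s.
  rewrite -Ar (bigD1 t) //= ltr_wpDr //; last by rewrite mulr_gt0.
  by apply: sumr_ge0 => u _; rewrite mulr_ge0 ?A_ge0 // ltW.
by rewrite pmulr_lgt0.
Qed.

Lemma pos_right_eigvec_ratio A phi r s :
  phi != 0 -> pos_right_eigvec A phi r -> \sum_t A s t * (r t / (r s * phi)) = 1.
Proof.
move=> phi_neq0 [r_gt0 Ar]; under eq_bigr do rewrite mulrA.
by rewrite -mulr_suml Ar [phi * _]mulrC divff // mulf_neq0 // gt_eqF.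
Qed.

Lemma stationary_gt0 mu A :
  stochastic A -> irreducible A -> stationary_distr mu A -> forall t, 0 < mu t.
Proof.
move=> [A_ge0 _] A_irr [mu_ge0 mu1 mu_stat] t.
have [s mus] := psum1_exists_gt0 mu_ge0 mu1.
have [n _ Ast] := A_irr s t.
rewrite -(mpow_stat n t mu_stat) (bigD1 s) //= ltr_wpDr //; last by rewrite mulr_gt0.
by apply: sumr_ge0 => u _; rewrite mulr_ge0 ?mpow_ge0.
Qed.

Lemma sum_inv_mul_ge1 mu : (forall t, 0 < mu t) -> forall t, 1 <= (\sum_s (mu s)^-1) * mu t.
Proof.
move=> mu_gt0 t; rewrite -(mulVf (lt0r_neq0 (mu_gt0 t))).
apply: ler_wpM2r; first exact: ltW.
by rewrite (bigD1 t) //= lerDl sumr_ge0 // => s _; rewrite invr_ge0 ltW.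
Qed.

End NonnegativeMatrices.

Lemma telescope_prod_expR (R : realType) (f c r : nat -> R) (p : R) a b :
  (a <= b)%N -> (forall k, r k != 0) -> p != 0 ->
  (forall k, (a < k < b.+1)%N -> f k = expR (c k) * (r k / (r k.-1 * p))) ->
  \prod_(a.+1 <= k < b.+1) f k =
  r b * expR (\sum_(a.+1 <= k < b.+1) c k) / (r a * p ^+ (b - a)).
Proof.
move=> + r_neq0 p_neq0 fE; rewrite (eq_big_nat _ _ fE); elim: b {fE} => [|b IH].
  by rewrite leqn0 => /eqP ->; rewrite !big_geq // expR0 expr0 mulr1 divff.
rewrite leq_eqVlt => /orP[/eqP ->|ab].
  by rewrite !big_geq // expR0 subnn expr0 mulr1 divff ?mulf_neq0.
rewrite big_nat_recr //= IH // (big_nat_recr b.+1) //= expRD subSn // exprS.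
by field; rewrite !r_neq0 p_neq0 expf_neq0.
Qed.

Section TiltedFunctional.
Variables (R : realType) (E : finType) (P Q : E -> E -> R) (g : E -> E -> E -> E -> R).
Variables (phi0 phi1 : R) (r0 : E * E -> R) (r1 : E * E * E -> R).
Hypotheses (P_stoch : stochastic P) (Q_stoch : stochastic Q).
Hypotheses (r0_eig : pos_right_eigvec (Phi0 P Q g) phi0 r0)
  (r1_eig : pos_right_eigvec (Phi1 P Q g) phi1 r1).

(* The state [s] only witnesses that [E] is inhabited. *)
Lemma Phi0_eigval_gt0 (s : E * E) : 0 < phi0.
Proof.
have [a Pa] := psum1_exists_gt0 (P_stoch.1 s.1) (P_stoch.2 s.1).
have [b Qb] := psum1_exists_gt0 (Q_stoch.1 s.2) (Q_stoch.2 s.2).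
have Phi_gt0 : 0 < Phi0 P Q g s (a, b) by rewrite /Phi0 !mulr_gt0 ?expR_gt0.
apply: pos_right_eigvec_gt0 Phi_gt0 r0_eig => t.
by rewrite /Phi0 !mulr_ge0 ?expR_ge0 ?P_stoch.1 ?Q_stoch.1.
Qed.

Lemma Phi1_eigval_gt0 (s : E * E * E) : 0 < phi1.
Proof.
have [a Pa] := psum1_exists_gt0 (P_stoch.1 s.1.1) (P_stoch.2 s.1.1).
have [b Qb] := psum1_exists_gt0 (Q_stoch.1 s.1.2) (Q_stoch.2 s.1.2).
have [c Qc] := psum1_exists_gt0 (Q_stoch.1 s.2) (Q_stoch.2 s.2).
have Phi_gt0 : 0 < Phi1 P Q g s (a, b, c) by rewrite /Phi1 !mulr_gt0 ?expR_gt0.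
apply: pos_right_eigvec_gt0 Phi_gt0 r1_eig => t.
by rewrite /Phi1 !mulr_ge0 ?expR_ge0 ?P_stoch.1 ?Q_stoch.1.
Qed.

Definition tilt0 (u v : E * E) : R :=
  expR (g u.1 u.2 v.1 v.2) * (r0 v / (r0 u * phi0)).

Definition tilt1 (s t : E * E * E) : R :=
  expR (g s.1.1 s.1.2 t.1.1 t.1.2 + g s.1.1 s.2 t.1.1 t.2) * (r1 t / (r1 s * phi1)).

Lemma tilt0_sum u : \sum_v kernel_prod P Q u v * tilt0 u v = 1.
Proof.
rewrite -(pos_right_eigvec_ratio u (lt0r_neq0 (Phi0_eigval_gt0 u)) r0_eig).
by apply: eq_bigr => v _; rewrite /kernel_prod /law_prod /tilt0 /Phi0; ring.
Qed.

Lemma tilt1_sum s : \sum_t kernel_prod (kernel_prod P Q) Q s t * tilt1 s t = 1.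
Proof.
rewrite -(pos_right_eigvec_ratio s (lt0r_neq0 (Phi1_eigval_gt0 s)) r1_eig).
by apply: eq_bigr => t _; rewrite /kernel_prod /law_prod /tilt1 /Phi1; ring.
Qed.

Definition swap23 (s : E * E * E) : E * E * E := (s.1.1, s.2, s.1.2).

Lemma swap23K : involutive swap23. Proof. by case=> [[]]. Qed.

Lemma kernel_prod_swap23 s t :
  kernel_prod (kernel_prod P Q) Q s (swap23 t) = kernel_prod (kernel_prod P Q) Q (swap23 s) t.
Proof. by rewrite /kernel_prod /law_prod /=; ring. Qed.

Lemma tilt0_fst_sum s :
  \sum_t kernel_prod (kernel_prod P Q) Q s t * tilt0 s.1 t.1 = 1.
Proof. by apply: etrans (sum_law_prod_fst _ _ _) _; rewrite tilt0_sum Q_stoch.2 mulr1. Qed.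

Variables (i d1 d2 : nat).

(* Steps 1..i normalise Phi0 on (X, Y), steps i+1..d1 normalise Phi1 on
   (X, Y, Z) and steps d1+1..i+d2 normalise Phi0 on (X, Z). *)
Definition Lg_step k (s t : E * E * E) : R :=
  if (k <= i)%N then tilt0 s.1 t.1
  else if (k <= d1)%N then tilt1 s t
  else if (k <= i + d2)%N then tilt0 (swap23 s).1 (swap23 t).1
  else 1.

Lemma Lg_step_sum k s : \sum_t kernel_prod (kernel_prod P Q) Q s t * Lg_step k s t = 1.
Proof.
rewrite /Lg_step; case: (k <= i)%N; first exact: tilt0_fst_sum.
case: (k <= d1)%N; first exact: tilt1_sum.
case: (k <= i + d2)%N => /=.
  rewrite (reindex_inj (inv_inj swap23K)) -(tilt0_fst_sum (swap23 s)).
  by apply: eq_bigr => t _; rewrite kernel_prod_swap23 /= -surjective_pairing.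
under eq_bigr do rewrite mulr1.
by rewrite sum_law_prod sum_law_prod !(P_stoch.2, Q_stoch.2) !mulr1.
Qed.

Lemma Lg_ge0 x y z : 0 <= Lg g phi0 phi1 r0 r1 i d1 d2 x y z.
Proof.
have phi0_ge0 := ltW (Phi0_eigval_gt0 (x 0%N, y 0%N)).
have phi1_ge0 := ltW (Phi1_eigval_gt0 (x 0%N, y 0%N, z 0%N)).
have r0_ge0 u := ltW (r0_eig.1 u); have r1_ge0 s := ltW (r1_eig.1 s).
by rewrite /Lg !mulr_ge0 ?invr_ge0 ?mulr_ge0 ?expR_ge0 ?exprn_ge0.
Qed.

Hypotheses (i_le_d1 : (i <= d1)%N) (d1_le : (d1 <= i + d2)%N).

Lemma Lg_prod N x y z : (i + d2 <= N)%N ->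
  Lg g phi0 phi1 r0 r1 i d1 d2 x y z =
  \prod_(1 <= k < N.+1) Lg_step k (x k.-1, y k.-1, z k.-1) (x k, y k, z k).
Proof.
move=> d2N.
have phi0_neq0 := lt0r_neq0 (Phi0_eigval_gt0 (x 0%N, y 0%N)).
have phi1_neq0 := lt0r_neq0 (Phi1_eigval_gt0 (x 0%N, y 0%N, z 0%N)).
have r0_neq0 u := lt0r_neq0 (r0_eig.1 u); have r1_neq0 s := lt0r_neq0 (r1_eig.1 s).
rewrite (@big_cat_nat _ _ _ (i + d2).+1) //= (@big_cat_nat _ _ _ d1.+1) //=.
rewrite (@big_cat_nat _ _ _ i.+1) //=.
rewrite (@telescope_prod_expR R _ (fun k => g (x k.-1) (y k.-1) (x k) (y k))
    (fun k => r0 (x k, y k)) phi0 0 i) //; last first.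
  by move=> k /andP[_ ki]; rewrite /Lg_step -ltnS ki.
rewrite (@telescope_prod_expR R _
    (fun k => g (x k.-1) (y k.-1) (x k) (y k) + g (x k.-1) (z k.-1) (x k) (z k))
    (fun k => r1 (x k, y k, z k)) phi1 i d1) //; last first.
  by move=> k /andP[ik kd1]; rewrite /Lg_step leqNgt ik -ltnS kd1.
rewrite (@telescope_prod_expR R _ (fun k => g (x k.-1) (z k.-1) (x k) (z k))
    (fun k => r0 (x k, z k)) phi0 d1 (i + d2)) //; last first.
  move=> k /andP[d1k kd2].
  by rewrite /Lg_step leqNgt (leq_ltn_trans i_le_d1 d1k) /= leqNgt d1k /= -ltnS kd2.
rewrite [X in _ = _ * X]big_nat_cond [X in _ = _ * X]big1 => [|k /andP[/andP[d2k _] _]].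
  by rewrite mulr1 subn0 /Lg /=; congr (_ * _ * _).
rewrite /Lg_step leqNgt (leq_ltn_trans (leq_addr _ _) d2k) /=.
by rewrite leqNgt (leq_ltn_trans d1_le d2k) /= leqNgt d2k.
Qed.

Lemma Lg_depends_y x z :
  depends_on (fun k => (k <= d1)%N) (fun y => Lg g phi0 phi1 r0 r1 i d1 d2 x y z).
Proof.
move=> y y' yy'; rewrite !(Lg_prod (N := i + d2)) //.
apply: eq_big_nat => k /andP[_ _]; case: (leqP k d1) => kd1.
  by rewrite !yy' // (leq_trans (leq_pred k)).
by rewrite /Lg_step leqNgt (leq_ltn_trans i_le_d1 kd1) /= leqNgt kd1.
Qed.

Lemma Lg_depends_z x y :
  depends_on (fun k => (i <= k <= i + d2)%N) (Lg g phi0 phi1 r0 r1 i d1 d2 x y).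
Proof.
move=> z z' zz'; rewrite !(Lg_prod (N := i + d2)) //.
apply: eq_big_nat => k /andP[_ kd2]; case: (leqP k i) => ki; first by rewrite /Lg_step ki.
have kwin : (i <= k <= i + d2)%N by move: ki kd2; lia.
have k1win : (i <= k.-1 <= i + d2)%N by move: ki kd2; lia.
by rewrite !zz'.
Qed.

Lemma expect3_Lg_eq1 N (mu1 mu2 mu3 : E -> R) :
  \sum_t mu1 t = 1 -> \sum_t mu2 t = 1 -> \sum_t mu3 t = 1 -> (i + d2 <= N)%N ->
  expect3 N mu1 P mu2 Q mu3 Q (Lg g phi0 phi1 r0 r1 i d1 d2) = 1.
Proof.
move=> mu1_1 mu2_1 mu3_1 d2N; rewrite expect3E 2!path_expect_prod.
pose mu := law_prod (law_prod mu1 mu2) mu3.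
rewrite -[RHS](@path_expect_martingale _ _ mu _ _ N _ Lg_step_sum);
  last by rewrite !sum_law_prod mu1_1 mu2_1 mu3_1 !mulr1.
congr path_expect; apply: funext => v; rewrite (Lg_prod _ _ _ d2N) /=.
by apply: eq_bigr => k _; rewrite -!surjective_pairing.
Qed.

End TiltedFunctional.

Section ShiftedFunctional.
Variables (R : realType) (E : finType) (P Q : E -> E -> R) (g : E -> E -> E -> E -> R).
Variables (phi0 phi1 : R) (r0 : E * E -> R) (r1 : E * E * E -> R).
Hypotheses (P_stoch : stochastic P) (Q_stoch : stochastic Q).
Hypotheses (r0_eig : pos_right_eigvec (Phi0 P Q g) phi0 r0)
  (r1_eig : pos_right_eigvec (Phi1 P Q g) phi1 r1).
Variables (mu : E -> R) (C : R).
Hypotheses (mu_stat : stationary_distr mu Q) (C_mu : forall t, 1 <= C * mu t).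
Variables (i d1 d2 : nat).
Hypotheses (i_le_d1 : (i <= d1)%N) (d1_le : (d1 <= i + d2)%N).

Let L := Lg g phi0 phi1 r0 r1 i d1 d2.

Lemma path_expect_Lg_shift_le x T N : (d1 < i + T)%N -> (i + d2 + T <= N)%N ->
  path_expect mu Q N (fun y => L x y (shift T y)) <=
  C * path_expect mu Q N (fun y => path_expect mu Q N (L x y)).
Proof.
move=> d1T d2N; have [m Nm] : exists m, N = (m + (i + T))%N by exists (N - (i + T))%N; lia.
have d2m : (d2 <= m)%N by lia.
have [mu_ge0 _ muQ] := mu_stat; have [Q_ge0 Q1] := Q_stoch.
have L_z := Lg_depends_z P_stoch Q_stoch r0_eig r1_eig i_le_d1 d1_le x.
have L_y := Lg_depends_y P_stoch Q_stoch r0_eig r1_eig i_le_d1 d1_le x.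
pose F y w := L x y (delay i w).
have F_y w : depends_on (fun k => (k <= d1)%N) (F^~ w) by move=> y y'; apply: L_y.
have F_w y : depends_on (fun k => (k <= m)%N) (F y).
  move=> w w' ww'; apply: L_z => k /andP[ik kd2]; rewrite /delay ww' //; lia.
have -> : path_expect mu Q N (fun y => L x y (shift T y)) =
    path_expect mu Q (m + (i + T)) (fun y => F y (shift (i + T) y)).
  rewrite Nm; congr path_expect; apply: funext => y; apply: L_z => k /andP[ik _].
  by rewrite /delay /shift; congr y; lia.
(* Markov property at time d1: the window of Y^T starts from Q^(i+T-d1)(Y_d1, .),
   a law bounded by 1 <= C * mu. *)
rewrite (path_expect_markov _ _ (ltnW d1T) F_y F_w).
have G_y : depends_on (fun k => (k <= d1)%N) (fun y => path_expect mu Q N (L x y)).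
  by move=> y y' yy'; congr path_expect; apply: funext => z; apply: L_y.
rewrite (path_expect_trunc _ Q1 G_y); last lia.
rewrite -path_expectZ; apply: ler_path_expect => // u.
rewrite (@path_expect_window _ _ mu Q i d2 m N) //; last lia.
apply: ler_path_expect_law => // [t|w]; last exact: (Lg_ge0 P_stoch Q_stoch r0_eig r1_eig).
by rewrite mpow_ge0 //= (le_trans (mpow_le1 _ _ _ Q_stoch)).
Qed.

End ShiftedFunctional.

Theorem lemma5p2 (R : realType) (E : finType) (P Q : E -> E -> R)
  (P_stoch : stochastic P) (P_irr : irreducible P) (P_aper : aperiodic P)
  (Q_stoch : stochastic Q) (Q_irr : irreducible Q) (Q_aper : aperiodic Q)
  (muX muY muZ : E -> R)
  (muX_stat : stationary_distr muX P) (muY_stat : stationary_distr muY Q)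
  (muZ_stat : stationary_distr muZ Q)
  (g : E -> E -> E -> E -> R)
  (phi0 phi1 : R) (r0 : E * E -> R) (r1 : E * E * E -> R)
  (phi0_sr : is_spectral_radius (Phi0 P Q g) phi0)
  (phi1_sr : is_spectral_radius (Phi1 P Q g) phi1)
  (r0_eig : pos_right_eigvec (Phi0 P Q g) phi0 r0)
  (r1_eig : pos_right_eigvec (Phi1 P Q g) phi1 r1) :
  (forall i d1 d2 : nat, (i <= d1)%N -> (d1 - i <= d2)%N ->
     forall N : nat, (i + d2 <= N)%N ->
       expect3 N muX P muY Q muZ Q (Lg g phi0 phi1 r0 r1 i d1 d2) = 1)
  /\
  (exists rho : R, 0 < rho /\
     forall i d1 d2 T : nat, (i <= d1)%N -> (d1 - i <= d2)%N ->
       (1 <= T)%N -> (d1 + 1 <= i + T)%N ->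
       forall N : nat, (i + d2 + T <= N)%N ->
         expect2 N muX P muY Q
           (fun x y => Lg g phi0 phi1 r0 r1 i d1 d2 x y (shift T y)) <= rho).
Proof.
have [P_ge0 _] := P_stoch; have [muX_ge0 muX1 _] := muX_stat.
have [muY_ge0 muY1 _] := muY_stat; have [_ muZ1 _] := muZ_stat.
have muY_gt0 := stationary_gt0 Q_stoch Q_irr muY_stat.
have C_muY := sum_inv_mul_ge1 muY_gt0.
split=> [i d1 d2 id1 d1d2 N d2N|].
  by apply: expect3_Lg_eq1 => //; rewrite -leq_subLR.
exists (\sum_t (muY t)^-1); split.
  have [t _] := psum1_exists_gt0 muY_ge0 muY1.
  by rewrite -(pmulr_lgt0 _ (muY_gt0 t)) (lt_le_trans ltr01 (C_muY t)).
move=> i d1 d2 T id1 d1d2 _ d1T N d2N.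
have d1_le : (d1 <= i + d2)%N by rewrite -leq_subLR.
rewrite -[leRHS]mulr1.
rewrite -(expect3_Lg_eq1 P_stoch Q_stoch r0_eig r1_eig id1 d1_le (N := N) muX1 muY1 muY1);
  last lia.
rewrite expect2E expect3E -path_expectZ; apply: ler_path_expect => // x /=.
by apply: (path_expect_Lg_shift_le P_stoch Q_stoch r0_eig r1_eig muY_stat C_muY id1 d1_le); lia.
Qed.
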